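(* Consider the generative logic with $\mu\to1$ in the setting below. Let $\Delta$ be a finite multiset of time-indexed formulas such that $E'(\Delta)\neq\emptyset$. Then for every $k\in\{1,\dots,K\}$, $$p(D=d_k\mid\Delta)=\begin{cases}\frac{1}{|E'(\Delta)|}&\text{if }k\in E'(\Delta),\\ 0&\text{otherwise.}\end{cases}$$
   Context: Let $\mathcal{L}$ be a propositional language and let $K,T\ge1$. There are data sequences $d_1,\dots,d_K$; repetitions are allowed, and data are identified by their index $k$. Each $d_k$ is associated with a sequence of models $m(d_k)=(m(d_k)^1,\dots,m(d_k)^T)$ of $\mathcal{L}$. The prior is $p(D=d_k)=1/K$. A time-indexed formula is written $\alpha^t$, with $\alpha\in\mathcal{L}$ and $1\le t\le T$. Write $[\![\alpha^t]\!]_k=1$ if $\alpha$ is true in $m(d_k)^t$, and $0$ otherwise. For $\mu\in(0,1)$ and a finite multiset $X$ of time-indexed formulas, define $$p(X\mid d_k,\mu)=\prod_{\alpha^t\in X}\mu^{[\![\alpha^t]\!]_k}(1-\mu)^{1-[\![\alpha^t]\!]_k}.$$ Then define $$p(D=d_k\mid\Delta)=\lim_{\mu\to1}\frac{p(\Delta\mid d_k,\mu)\,p(d_k)}{\sum_j p(\Delta\mid d_j,\mu)\,p(d_j)}.$$ An index $k$ is an evidence of $X$ if $[\![\alpha^t]\!]_k=1$ for all $\alpha^t\in X$. Let $E(X)$ be the set of such indices. $X$ is called founded if $E(X)\neq\emptyset$. Let $MFS(\Delta)$ be the set of nonempty founded sub-multisets $S\subseteq\Delta$ that have maximum cardinality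 among all nonempty founded sub-multisets of $\Delta$. Set $E'(\Delta)=\bigcup_{S\in MFS(\Delta)}E(S)$. This union is empty if $MFS(\Delta)=\emptyset$. *)

From HB Require Import structures.
From mathcomp Require Import all_boot all_order all_algebra.
From mathcomp Require Import all_classical all_reals all_analysis.
Set Implicit Arguments. Unset Strict Implicit. Unset Printing Implicit Defensive.
Import Order.TTheory GRing.Theory Num.Theory.
Local Open Scope ring_scope.

Inductive form (A : Type) : Type :=
| Atom of A
| Bot
| Neg of form A
| And of form A & form A
| Or of form A & form A
| Imp of form A & form A.

Definition model (A : Type) := A -> bool.

Fixpoint sat (A : Type) (w : model A) (f : form A) : bool :=
  match f with
  | Atom a => w a
  | Bot => false
  | Neg g => ~~ sat w g
  | And g h => sat w g && sat w h
  | Or g h => sat w g || sat w h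
  | Imp g h => sat w g ==> sat w h
  end.

(* Time-indexed formula alpha^t with t : 'I_T (i.e. times 1..T as 0..T-1). *)
Definition tform (A : Type) (T : nat) := (form A * 'I_T)%type.

(* Data d_1..d_K as indices k : 'I_K; [m k t] is the model m(d_k)^t. *)

Definition den (A : Type) (K T : nat) (m : 'I_K -> 'I_T -> model A)
  (x : tform A T) (k : 'I_K) : nat := sat (m k x.2) x.1.

(* p(X | d_k, mu); finite multisets are represented by sequences. *)
Definition lik (R : realType) (A : Type) (K T : nat)
  (m : 'I_K -> 'I_T -> model A) (X : seq (tform A T)) (k : 'I_K) (mu : R) : R :=
  \prod_(x <- X) (mu ^+ den m x k * (1 - mu) ^+ (1 - den m x k)).

(* The expression inside the limit defining p(D = d_k | Delta), with prior 1/K. *)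
Definition post_mu (R : realType) (A : Type) (K T : nat)
  (m : 'I_K -> 'I_T -> model A) (Delta : seq (tform A T)) (k : 'I_K) (mu : R) : R :=
  lik m Delta k mu * (K%:R)^-1 / \sum_(j < K) lik m Delta j mu * (K%:R)^-1.

Definition evid (A : Type) (K T : nat) (m : 'I_K -> 'I_T -> model A)
  (X : seq (tform A T)) : {set 'I_K} :=
  [set k | all (fun x => sat (m k x.2) x.1) X].

Definition founded (A : Type) (K T : nat) (m : 'I_K -> 'I_T -> model A)
  (X : seq (tform A T)) : bool := evid m X != finset.set0.

(* Sub-multisets of Delta are the [mask b Delta] for b a bit-vector of
   length size Delta (selection of positions). *)
Definition subms (A : Type) (T : nat) (Delta : seq (tform A T))
  (b : (size Delta).-tuple bool) : seq (tform A T) := mask b Delta.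
Arguments subms {A T} Delta b.

Definition in_MFS (A : Type) (K T : nat) (m : 'I_K -> 'I_T -> model A)
  (Delta : seq (tform A T)) (b : (size Delta).-tuple bool) : bool :=
  [&& (0 < size (subms Delta b))%N, founded m (subms Delta b) &
      [forall b' : (size Delta).-tuple bool,
         (0 < size (subms Delta b'))%N && founded m (subms Delta b') ==>
         (size (subms Delta b') <= size (subms Delta b))%N]].

Arguments in_MFS {A K T} m Delta b.

Definition Eprime (A : Type) (K T : nat) (m : 'I_K -> 'I_T -> model A)
  (Delta : seq (tform A T)) : {set 'I_K} :=
  \bigcup_(b : (size Delta).-tuple bool | in_MFS m Delta b) evid m (subms Delta b).

(** The likelihood of datum [d_j] is [mu ^ s_j * (1 - mu) ^ (|Delta| - s_j)], where
    [s_j] counts the formulas of [Delta] true at [d_j].  Dividing numerator and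
    denominator of the posterior by [(1 - mu) ^ (|Delta| - M)], with [M] the largest
    [s_j], leaves polynomials in [mu] whose value at [1] is [1] if [s_j = M] and [0]
    otherwise, so the posterior tends to the uniform distribution on the data with
    maximal [s_j].  These are exactly the evidences of the maximal founded
    sub-multisets: the formulas true at [d_j] form a founded sub-multiset of size
    [s_j], and every founded sub-multiset with evidence [d_j] has size at most [s_j]. *)
From HB Require Import structures.
From mathcomp Require Import all_boot all_order all_algebra.
From mathcomp Require Import all_classical all_reals all_analysis.
From mathcomp Require Import ring zify.
Set Implicit Arguments.
Unset Strict Implicit.
Unset Printing Implicit Defensive.
Import Order.TTheory GRing.Theory Num.Theory.
Import numFieldNormedType.Exports.
Local Open Scope ring_scope.
Local Open Scope classical_set_scope.

Lemma size_mask_all_le (X : Type) (q : pred X) (s : seq X) (b : bitseq) :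
  all q (mask b s) -> (size (mask b s) <= count q s)%N.
Proof.
elim: s b => [|x s IHs] [|[] b] //= => [/andP[-> /IHs]|/IHs le_count] //.
exact: leq_trans le_count (leq_addl _ _).
Qed.

Section MaxExponentRatio.

Variables (R : realType) (I : finType) (a : I -> nat) (n : nat).
Hypothesis a_le : forall j, (a j <= n)%N.

Let M := (\max_j a j)%N.

Let w j : {poly R} := 'X ^+ a j * (1 - 'X) ^+ (M - a j).

Let hornerw j x : (w j).[x] = x ^+ a j * (1 - x) ^+ (M - a j).
Proof. by rewrite hornerM !horner_exp hornerD hornerN hornerX hornerC. Qed.

Let w1 j : (w j).[1] = (a j == M)%:R.
Proof.
by rewrite hornerw expr1n mul1r subrr expr0n subn_eq0 eqn_leq leq_bigmax.
Qed.

Let sum_w1 : (\sum_j w j).[1] = #|[set j | a j == M]%SET|%:R.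
Proof.
rewrite horner_sum (eq_bigr _ (fun j _ => w1 j)) -natr_sum.
rewrite -sum1_card; congr _%:R; rewrite [RHS]big_mkcond.
by apply: eq_bigr => j _; rewrite inE; case: (a j == M).
Qed.

Let weight_factor j (x : R) :
  x ^+ a j * (1 - x) ^+ (n - a j) = (1 - x) ^+ (n - M) * (w j).[x].
Proof.
rewrite hornerw mulrCA -exprD; congr (_ * _ ^+ _).
have M_le_n : (M <= n)%N by apply/bigop.bigmax_leqP.
have := @leq_bigmax _ a j; rewrite -/M; lia.
Qed.

Lemma cvg_max_exponent_ratio (k : I) :
  (fun x : R => x ^+ a k * (1 - x) ^+ (n - a k) /
                \sum_j x ^+ a j * (1 - x) ^+ (n - a j)) @ at_left 1 -->
  (if a k == M then (#|[set j | a j == M]%SET|%:R)^-1 else 0 : R^o).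
Proof.
have sum_w1_neq0 : (\sum_j w j).[1] != 0.
  rewrite sum_w1 pnatr_eq0 -lt0n; apply/card_gt0P.
  have I_gt0 : (0 < #|I|)%N by apply/card_gt0P; exists k.
  have [j0 M_eq] := bigop.eq_bigmax a I_gt0.
  by exists j0; rewrite inE /M M_eq.
have -> : (if a k == M then (#|[set j | a j == M]%SET|%:R)^-1 else 0 : R^o)
          = (w k).[1] / (\sum_j w j).[1].
  by rewrite w1 sum_w1; case: (a k == M); rewrite ?mul1r ?mul0r.
have ratio_cont : (fun x => (w k).[x] / (\sum_j w j).[x]) @ (1 : R) -->
                   ((w k).[1] / (\sum_j w j).[1] : R^o).
  by apply: cvgM; [|apply: cvgV => //]; exact: continuous_horner.
apply: cvg_trans (cvg_at_left_filter ratio_cont).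
apply: near_eq_cvg; near=> x.
have x_neq1 : (1 - x) ^+ (n - M) != 0.
  rewrite expf_neq0 // subr_eq0 eq_sym; near: x; exact: nbhs_left_neq.
rewrite /= weight_factor (eq_bigr _ (fun j _ => weight_factor j x)).
by rewrite -mulr_sumr horner_sum invfM mulrACA divff // mul1r.
Unshelve. all: end_near.
Qed.

End MaxExponentRatio.

Definition nsat (A : Type) (K T : nat) (m : 'I_K -> 'I_T -> model A)
  (X : seq (tform A T)) (j : 'I_K) : nat := count (fun x => sat (m j x.2) x.1) X.

Lemma likE (R : realType) (A : Type) (K T : nat)
  (m : 'I_K -> 'I_T -> model A) (X : seq (tform A T)) (j : 'I_K) (mu : R) :
  lik m X j mu = mu ^+ nsat m X j * (1 - mu) ^+ (size X - nsat m X j).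
Proof.
rewrite /lik /nsat; elim: X => [|x X IHX]; first by rewrite big_nil mulr1.
rewrite big_cons IHX /den /=.
have := count_size (fun x => sat (m j x.2) x.1) X.
case: (sat (m j x.2) x.1) => /= le_size.
  by rewrite subnn expr1 mulr1 mulrA -exprS add1n subSS.
by rewrite subn0 expr1 add0n subSn // exprS; ring.
Qed.

Lemma post_muE (R : realType) (A : Type) (K T : nat)
  (m : 'I_K -> 'I_T -> model A) (Delta : seq (tform A T)) (k : 'I_K) (mu : R) :
  post_mu m Delta k mu = lik m Delta k mu / \sum_(j < K) lik m Delta j mu.
Proof.
have K_neq0 : (K%:R : R)^-1 != 0.
  by rewrite invr_eq0 pnatr_eq0 -lt0n (leq_ltn_trans _ (ltn_ord k)).
by rewrite /post_mu -mulr_suml invfM mulrACA divff // mulr1.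
Qed.

Section MaximalFoundedSubmultisets.

Variables (A : Type) (K T : nat) (m : 'I_K -> 'I_T -> model A).
Variable Delta : seq (tform A T).

Let s := nsat m Delta.
Let M := (\max_j s j)%N.

Lemma size_subms_le b j :
  j \in evid m (subms Delta b) -> (size (subms Delta b) <= s j)%N.
Proof. by rewrite inE; exact: size_mask_all_le. Qed.

Definition sat_mask j : (size Delta).-tuple bool :=
  map_tuple (fun x => sat (m j x.2) x.1) (in_tuple Delta).

Lemma subms_sat_mask j :
  subms Delta (sat_mask j) = seq.filter (fun x => sat (m j x.2) x.1) Delta.
Proof. by rewrite /subms filter_mask. Qed.

Lemma size_sat_mask j : size (subms Delta (sat_mask j)) = s j.
Proof. by rewrite subms_sat_mask size_filter. Qed.

Lemma evid_sat_mask j : j \in evid m (subms Delta (sat_mask j)).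
Proof. by rewrite inE subms_sat_mask filter_all. Qed.

Lemma in_MFS_size b : in_MFS m Delta b -> size (subms Delta b) = M.
Proof.
case/and3P => size_gt0 /set0Pn[j0 ev_j0] /forallP maximal.
have K_gt0 : (0 < #|'I_K|)%N by apply/card_gt0P; exists j0.
have [j M_eq] := bigop.eq_bigmax s K_gt0.
have le_M : (size (subms Delta b) <= M)%N.
  exact: leq_trans (size_subms_le ev_j0) (leq_bigmax _).
apply/eqP; rewrite eqn_leq le_M /M M_eq -size_sat_mask.
apply: (implyP (maximal _)).
rewrite size_sat_mask -M_eq (leq_trans size_gt0 le_M) /=.
by apply/set0Pn; exists j; exact: evid_sat_mask.
Qed.

Lemma Eprime_argmax :
  Eprime m Delta != finset.set0 -> Eprime m Delta = [set j | s j == M]%SET.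
Proof.
case/set0Pn => j0 /bigcupP[b0 MFS_b0 _].
have M_gt0 : (0 < M)%N by rewrite -(in_MFS_size MFS_b0); case/and3P: MFS_b0.
apply/setP => j; rewrite inE; apply/bigcupP/eqP => [[b MFS_b ev_j]|s_j].
  by apply/eqP; rewrite eqn_leq leq_bigmax -(in_MFS_size MFS_b) size_subms_le.
exists (sat_mask j); last exact: evid_sat_mask.
apply/and3P; split; rewrite ?size_sat_mask ?s_j //.
  by apply/set0Pn; exists j; exact: evid_sat_mask.
apply/forallP => b; apply/implyP => /andP[_ /set0Pn[j' ev_j']].
exact: leq_trans (size_subms_le ev_j') (leq_bigmax _).
Qed.

End MaximalFoundedSubmultisets.

Theorem theorem3 (R : realType) (A : Type) (K T : nat)
  (hK : (0 < K)%N) (hT : (0 < T)%N)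
  (m : 'I_K -> 'I_T -> model A) (Delta : seq (tform A T))
  (hE : Eprime m Delta != finset.set0) (k : 'I_K) :
  (fun mu : R => post_mu m Delta k mu) @ at_left (1 : R) -->
    (if k \in Eprime m Delta then (#|Eprime m Delta|%:R)^-1 else 0 : R^o).
Proof.
rewrite (Eprime_argmax hE) inE.
under eq_fun => mu do rewrite post_muE likE (eq_bigr _ (fun j _ => likE m Delta j mu)).
by apply: cvg_max_exponent_ratio => j; exact: count_size.
Qed.
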